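(* Let $d\ge 2$, $2\le k\le d+1$, let $y_1,\dots,y_N\in\{1,\dots,k\}$ be labels of a class-balanced dataset (each class has exactly $N/k\ge 1$ samples), and let $s>0$. For $\boldsymbol w_1,\dots,\boldsymbol w_k,\boldsymbol z_1,\dots,\boldsymbol z_N\in\mathbb S^{d-1}$ let $\theta_{ij}=\arccos(\boldsymbol w_j^{\mathrm T}\boldsymbol z_i)\in[0,\pi]$, and for a function $f:[0,\pi]\to\mathbb R$ define the empirical risk $$L_f=\frac1N\sum_{i=1}^N-\log\frac{\exp(s f(\theta_{iy_i}))}{\exp(s f(\theta_{iy_i}))+\sum_{j\ne y_i}\exp(s\cos\theta_{ij})}.$$ Consider the following choices of $f$: (NormFace) $f(\theta)=\cos\theta$; (CosFace / AM-Softmax) $f(\theta)=\cos\theta-m$ with $m\ge0$; (ArcFace) $f(\theta)=\cos(\theta+m)$ with $m\in[0,\pi/2]$ and $\cos m\ge\frac12$; (A-Softmax with feature normalization) $f(\theta)=(-1)^\ell\cos(m\theta)-2\ell$ for $\theta\in[\ell\pi/m,(\ell+1)\pi/m]$, $\ell=0,\dots,m-1$, with $m\ge1$ an integer. Then for each of these losses, the set of minimizers of $L_f$ over $(\mathbb S^{d-1})^{k+N}$ is exactly the set of configurations with $\boldsymbol w_i^{\mathrm T}\boldsymbol w_j=-\frac1{k-1}$ for all $i\ne j$ and $\boldsymbol z_i=\boldsymbol w_{y_i}$ for all $i$; in particular all these losses share the same optimal solutions.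
   Context: $\mathbb S^{d-1}$ is the unit sphere in $\mathbb R^d$; $\boldsymbol w_j$ are class prototypes and $\boldsymbol z_i$ is the feature of a sample with label $y_i$. *)

From HB Require Import structures.
From mathcomp Require Import all_boot all_order all_algebra.
From mathcomp Require Import all_classical all_reals all_analysis.
Set Implicit Arguments. Unset Strict Implicit. Unset Printing Implicit Defensive.
Import Order.TTheory GRing.Theory Num.Theory.
Local Open Scope ring_scope.

Definition dotv {R : realType} {d : nat} (u v : 'rV[R]_d) : R :=
  \sum_(i < d) u ord0 i * v ord0 i.

Definition on_sphere {R : realType} {d : nat} (u : 'rV[R]_d) : Prop :=
  dotv u u = 1.

Definition angle {R : realType} {d : nat} (w z : 'rV[R]_d) : R :=
  acos (dotv w z).

Definition risk {R : realType} {d k N : nat} (s : R) (f : R -> R)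
  (y : 'I_N -> 'I_k) (W : 'I_k -> 'rV[R]_d) (Z : 'I_N -> 'rV[R]_d) : R :=
  N%:R^-1 * \sum_(i < N)
    - ln (expR (s * f (angle (W (y i)) (Z i))) /
          (expR (s * f (angle (W (y i)) (Z i))) +
           \sum_(j < k | j != y i) expR (s * cos (angle (W j) (Z i))))).

Definition normface_f {R : realType} (f : R -> R) : Prop :=
  forall t, 0 <= t <= pi -> f t = cos t.

Definition cosface_f {R : realType} (f : R -> R) : Prop :=
  exists m : R, 0 <= m /\ forall t, 0 <= t <= pi -> f t = cos t - m.

Definition arcface_f {R : realType} (f : R -> R) : Prop :=
  exists m : R, [/\ 0 <= m, m <= pi / 2, 2^-1 <= cos m &
    forall t, 0 <= t <= pi -> f t = cos (t + m)].

Definition asoftmax_f {R : realType} (f : R -> R) : Prop :=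
  exists m : nat, (1 <= m)%N /\
    forall (l : nat) (t : R), (l < m)%N ->
      l%:R * pi / m%:R <= t <= l.+1%:R * pi / m%:R ->
      f t = (-1) ^+ l * cos (m%:R * t) - 2 * l%:R.

Definition margin_fun {R : realType} (f : R -> R) : Prop :=
  [\/ normface_f f, cosface_f f, arcface_f f | asoftmax_f f].

Definition balanced {k N : nat} (y : 'I_N -> 'I_k) : Prop :=
  forall c : 'I_k, (#|[set i | y i == c]| * k)%N = N.

(* Every admissible margin satisfies f t <= f 0 - (1 - cos t) / 2 on [0, pi].
   For one sample, the loss is ln (1 + sum_{j <> y_i} exp x_j) with logits
   x_j = s (w_j . z_i - f theta_i); its tangent plane at the point where every x_j
   equals c = s (-1/(k-1) - f 0) bounds it below by ln (1 + (k-1) e^c) plus a positive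
   multiple of sum_j (x_j - c).  Completing the square with b = (k+1)/2 and S = sum_j w_j
   writes that sum as (b^2 - |b w_{y_i} - S|^2) / (2b) plus nonnegative terms, and by
   class balance the first parts average to |S|^2 / k >= 0.  Hence the risk is at
   least ln (1 + (k-1) e^c), with equality iff S = 0, z_i = w_{y_i} and
   w_j . w_{y_i} = -1/(k-1); a regular simplex in the first k-1 coordinates of R^d
   attains the bound. *)

From HB Require Import structures.
From mathcomp Require Import all_boot all_order all_algebra.
From mathcomp Require Import all_classical all_reals all_analysis.
From mathcomp Require Import ring lra.
Import Order.TTheory GRing.Theory Num.Theory.
Local Open Scope ring_scope.
Set Implicit Arguments. Unset Strict Implicit. Unset Printing Implicit Defensive.

Section DotProduct.
Variables (R : realType) (d : nat).
Implicit Types (u v w z : 'rV[R]_d).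

Lemma dotvC u v : dotv u v = dotv v u.
Proof. by apply: eq_bigr => i _; rewrite mulrC. Qed.

Lemma dotvDl u v w : dotv (u + v) w = dotv u w + dotv v w.
Proof. by rewrite /dotv -big_split; apply: eq_bigr => i _; rewrite !mxE mulrDl. Qed.

Lemma dotvZl a u w : dotv (a *: u) w = a * dotv u w.
Proof. by rewrite /dotv mulr_sumr; apply: eq_bigr => i _; rewrite !mxE mulrA. Qed.

Lemma dotvNl u w : dotv (- u) w = - dotv u w.
Proof. by rewrite -scaleN1r dotvZl mulN1r. Qed.

Lemma dotvBl u v w : dotv (u - v) w = dotv u w - dotv v w.
Proof. by rewrite dotvDl dotvNl. Qed.

Lemma dotvDr u v w : dotv w (u + v) = dotv w u + dotv w v.
Proof. by rewrite dotvC dotvDl !(dotvC w). Qed.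

Lemma dotvZr a u w : dotv w (a *: u) = a * dotv w u.
Proof. by rewrite dotvC dotvZl dotvC. Qed.

Lemma dotvBr u v w : dotv w (u - v) = dotv w u - dotv w v.
Proof. by rewrite !(dotvC w) dotvBl. Qed.

Lemma dotv_suml (I : finType) (P : pred I) (F : I -> 'rV[R]_d) w :
  dotv (\sum_(j | P j) F j) w = \sum_(j | P j) dotv (F j) w.
Proof.
apply: (big_morph (dotv^~ w)) => [u v|]; first exact: dotvDl.
by rewrite /dotv big1 // => i _; rewrite mxE mul0r.
Qed.

Lemma dotvv_ge0 u : 0 <= dotv u u.
Proof. by apply: sumr_ge0 => i _; rewrite -expr2 sqr_ge0. Qed.

Lemma dotvv_eq0 u : dotv u u = 0 -> u = 0.
Proof.
move=> uu0; apply/rowP => i; rewrite mxE; apply/eqP; rewrite -sqrf_eq0 expr2.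
by apply/eqP; apply: (psumr_eq0P _ uu0) => // j _; rewrite -expr2 sqr_ge0.
Qed.

Lemma dotvvB u v : dotv (u - v) (u - v) = dotv u u - 2 * dotv u v + dotv v v.
Proof. by rewrite dotvBl !dotvBr (dotvC v u); ring. Qed.

Lemma on_sphere_dotv_itv u v : on_sphere u -> on_sphere v -> -1 <= dotv u v <= 1.
Proof.
move=> hu hv; have := dotvv_ge0 (u - v); have := dotvv_ge0 (u + v).
rewrite dotvvB dotvDl !dotvDr hu hv (dotvC v u) => ? ?; apply/andP; split; lra.
Qed.

Lemma cos_angle u v : on_sphere u -> on_sphere v -> cos (angle u v) = dotv u v.
Proof. by move=> hu hv; have [_ ->] := acos_def (on_sphere_dotv_itv hu hv). Qed.

Lemma angle_itv u v : on_sphere u -> on_sphere v -> 0 <= angle u v <= pi.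
Proof. by move=> hu hv; have [-> _] := acos_def (on_sphere_dotv_itv hu hv). Qed.

Lemma angle_refl u : on_sphere u -> angle u u = 0.
Proof. by rewrite /on_sphere /angle => ->; exact: acos1. Qed.

Lemma sub_dotv_sphereE b v z : on_sphere z -> b != 0 ->
  b - dotv v z = (b ^+ 2 - dotv v v) / (2 * b) + dotv (v - b *: z) (v - b *: z) / (2 * b).
Proof.
by move=> hz b0; rewrite dotvvB dotvZr dotvZl dotvZr hz; field.
Qed.

Lemma sum_dotvv_centered (I : finType) (w : I -> 'rV[R]_d) b :
  (forall c, on_sphere (w c)) ->
  let S := \sum_c w c in
  \sum_c dotv (b *: w c - S) (b *: w c - S) =
    #|I|%:R * b ^+ 2 + (#|I|%:R - 2 * b) * dotv S S.
Proof.
move=> hw S; under eq_bigr => c _ do rewrite dotvvB !dotvZl dotvZr hw.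
rewrite !big_split /= sumrN -!mulr_sumr -dotv_suml -/S !sumr_const.
by rewrite -mulr_natr expr2; ring.
Qed.

End DotProduct.

Section Margins.
Variable R : realType.
Implicit Types (f : R -> R) (t : R).

(* With a factor [e] in place of [1/2], the completing-the-square scale becomes
   [b = 1 + (k - 1) e] and the centering argument needs [2 b >= k], i.e. [e >= 1/2]. *)
Definition cos_dominated f :=
  forall t, 0 <= t <= pi -> f t <= f 0 + (cos t - 1) / 2.

Let pi_ge0 : (0 : R) <= pi. Proof. exact/ltW/pi_gt0. Qed.

Let zero_in_0pi : 0 <= (0 : R) <= pi. Proof. by rewrite lexx pi_ge0. Qed.

Lemma normface_cos_dominated f : normface_f f -> cos_dominated f.
Proof. by move=> hf t ht; rewrite !hf // cos0; have := cos_le1 t; lra. Qed.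

Lemma cosface_cos_dominated f : cosface_f f -> cos_dominated f.
Proof.
by case=> m [m0 hf] t ht; rewrite !hf // cos0; have := cos_le1 t; lra.
Qed.

Lemma arcface_cos_dominated f : arcface_f f -> cos_dominated f.
Proof.
case=> m [m0 m_le cos_m hf] t ht; rewrite !hf // add0r cosD.
have sin_m : 0 <= sin m.
  by apply: sin_ge0_pi; rewrite m0 (le_trans m_le) // ler_pdivrMr //; lra.
have := mulr_ge0 (sin_ge0_pi ht) sin_m.
have : (cos m - 2^-1) * (cos t - 1) <= 0 by apply: mulr_ge0_le0; have := cos_le1 t; lra.
lra.
Qed.

Lemma nat_bracket (m : nat) (x : R) : (0 < m)%N -> 0 <= x <= m%:R ->
  exists2 l : nat, (l < m)%N & l%:R <= x <= l.+1%:R.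
Proof.
move=> m_gt0 /andP[x0 xm]; have /andP[tx xt] := truncn_itv x0.
have [tm|mt] := ltnP (Num.truncn x) m; first by exists (Num.truncn x); rewrite ?tx ?ltW.
exists m.-1; rewrite ?prednK ?ltn_predL // xm andbT.
by rewrite (le_trans _ tx) // ler_nat (leq_trans (leq_pred m)).
Qed.

(* On the first piece [f t = cos (m t) <= cos t]; on the others [f t <= 1 - 2 l <= -1]. *)
Lemma asoftmax_cos_dominated f : asoftmax_f f -> cos_dominated f.
Proof.
case=> m [m1 hf] t /andP[t0 tpi].
have m_gt0 : (0 : R) < m%:R by rewrite ltr0n.
have [l lm /andP[tl lt]] : exists2 l : nat, (l < m)%N &
    l%:R * pi / m%:R <= t <= l.+1%:R * pi / m%:R.
  have [|l lm hl] := @nat_bracket m (t * m%:R / pi) m1.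
    by rewrite divr_ge0 ?mulr_ge0 // ler_pdivrMr ?pi_gt0 // mulrC ler_pM2l.
  exists l => //; move: hl.
  by rewrite ler_pdivlMr ?ler_pdivrMr ?pi_gt0 // ler_pdivlMr.
rewrite [f 0](hf 0%N) //; last by rewrite !mul0r lexx mul1r divr_ge0.
rewrite (hf l) ?tl ?lt // expr0 mul1r mulr0 cos0 mulr0 subr0.
have := cos_le1 t; have := cos_geN1 t.
case: l lm tl lt => [|l] _ _ lt.
  have : cos (m%:R * t) <= cos t.
    rewrite leNgt ltr_cos ?in_itv /= ?t0 ?tpi ?mulr_ge0 ?ler0n //= -?leNgt.
      by rewrite -{1}[t]mul1r ler_wpM2r // ler1n.
    by move: lt; rewrite mul1r ler_pdivlMr // mulrC.
  by rewrite expr0 mul1r mulr0 subr0; lra.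
have : (-1) ^+ l.+1 * cos (m%:R * t) <= 1.
  by rewrite -signr_odd; case: odd; rewrite ?mulN1r ?mul1r ?cos_le1 // lerNl cos_geN1.
have : (1 : R) <= l.+1%:R by rewrite ler1n.
lra.
Qed.

Lemma margin_fun_cos_dominated f : margin_fun f -> cos_dominated f.
Proof.
case; [exact: normface_cos_dominated | exact: cosface_cos_dominated |
  exact: arcface_cos_dominated | exact: asoftmax_cos_dominated].
Qed.

End Margins.

Section LogSumExp.
Variable R : realType.

Lemma expR_tangent_ge (x y : R) : 0 <= expR x - expR y * (1 + (x - y)).
Proof.
by rewrite subr_ge0 -[in leRHS](subrK y x) expRD mulrC ler_pM2r ?expR_gt0 ?expR_ge1Dx.
Qed.

Lemma expR_tangent_eq (x y : R) : expR x - expR y * (1 + (x - y)) = 0 -> x = y.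
Proof.
apply: contra_eq; rewrite -subr_eq0 => /expR_gt1Dx.
rewrite -(ltr_pM2l (expR_gt0 y)) -expRD subrKC => lt.
by rewrite gt_eqF // subr_gt0.
Qed.

(* Jensen's inequality for [expR], with one point of mass [a] pinned at [0]. *)
Lemma expR_jensen (I : finType) (P : pred I) (a : R) (w t : I -> R) :
  0 < a -> (forall i, P i -> 0 < w i) -> a + \sum_(i | P i) w i = 1 ->
  let mu := \sum_(i | P i) w i * t i in
  expR mu <= a + \sum_(i | P i) w i * expR (t i) /\
  (a + \sum_(i | P i) w i * expR (t i) <= expR mu -> forall i, P i -> t i = 0).
Proof.
move=> a_gt0 w_gt0 w_sum mu.
pose gap x := expR x - expR mu * (1 + (x - mu)).
have sum_gap : \sum_(i | P i) w i * gap (t i) =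
    \sum_(i | P i) w i * expR (t i) - expR mu * ((1 - a) * (1 - mu) + mu).
  transitivity (\sum_(i | P i)
      (w i * expR (t i) - expR mu * (w i * (1 - mu) + w i * t i))).
    by apply: eq_bigr => i _; rewrite /gap; ring.
  have -> : 1 - a = \sum_(i | P i) w i by rewrite -w_sum addrC addKr.
  by rewrite sumrB -mulr_sumr big_split /= -mulr_suml -/mu.
have gapE : a + \sum_(i | P i) w i * expR (t i) - expR mu =
    a * gap 0 + \sum_(i | P i) w i * gap (t i).
  by rewrite sum_gap /gap expR0; ring.
have gap_ge0 i : P i -> 0 <= w i * gap (t i).
  by move=> Pi; rewrite mulr_ge0 ?expR_tangent_ge ?ltW ?w_gt0.
have gap0_ge0 : 0 <= a * gap 0 := mulr_ge0 (ltW a_gt0) (expR_tangent_ge _ _).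
have slack_ge0 := addr_ge0 gap0_ge0 (sumr_ge0 _ gap_ge0).
split; first by rewrite -subr_ge0 gapE.
rewrite -subr_le0 gapE => le0.
have /eqP : a * gap 0 + \sum_(i | P i) w i * gap (t i) = 0.
  by apply: le_anti; rewrite le0 slack_ge0.
rewrite (paddr_eq0 gap0_ge0 (sumr_ge0 _ gap_ge0)).
case/andP => /eqP gap0 /eqP gapsum0 i Pi.
have mu0 : mu = 0.
  apply/esym/expR_tangent_eq; move/eqP: gap0.
  by rewrite mulf_eq0 gt_eqF // => /eqP.
rewrite -mu0; apply: expR_tangent_eq; move/eqP: (psumr_eq0P gap_ge0 gapsum0 Pi).
by rewrite mulf_eq0 gt_eqF ?w_gt0 // => /eqP.
Qed.

(* The tangent-plane bound of the convex map [x |-> ln (1 + \sum_j expR (x j))] at the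
   constant point [c], where its gradient has all coordinates equal to [expR c / Q]. *)
Lemma ln1Dsum_expR_tangent (I : finType) (P : pred I) (x : I -> R) (c : R) :
  let Q := 1 + #|P|%:R * expR c in
  let L := ln (1 + \sum_(j | P j) expR (x j)) in
  ln Q + expR c / Q * \sum_(j | P j) (x j - c) <= L /\
  (L <= ln Q + expR c / Q * \sum_(j | P j) (x j - c) -> forall j, P j -> x j = c).
Proof.
move=> Q L; have Q_gt0 : 0 < Q by rewrite ltr_wpDr ?mulr_ge0 ?ler0n ?expR_ge0.
have w_gt0 (j : I) : P j -> 0 < expR c / Q by rewrite divr_gt0 ?expR_gt0.
have w_sum : Q^-1 + \sum_(j | P j) expR c / Q = 1.
  by rewrite sumr_const -mulr_natr /Q; field; rewrite gt_eqF.
have Qinv_gt0 : 0 < Q^-1 by rewrite invr_gt0.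
have [J1 J2] := expR_jensen (fun j => x j - c) Qinv_gt0 w_gt0 w_sum.
have LE : L = ln Q + ln (Q^-1 + \sum_(j | P j) expR c / Q * expR (x j - c)).
  rewrite /L -lnM ?posrE ?invr_gt0 ?ltr_wpDr ?sumr_ge0 // => [|j _]; last first.
    by rewrite mulr_ge0 ?divr_ge0 ?expR_ge0 ?ltW.
  rewrite mulrDr mulfV ?gt_eqF // mulr_sumr; congr (ln (1 + _)).
  by apply: eq_bigr => j _; rewrite expRB; field; rewrite !gt_eqF ?expR_gt0.
have avg_gt0 : 0 < Q^-1 + \sum_(j | P j) expR c / Q * expR (x j - c).
  exact: lt_le_trans (expR_gt0 _) J1.
rewrite -mulr_sumr in J1 J2; rewrite LE !lerD2l.
split; first by rewrite -[X in X <= _]expRK ler_ln ?posrE ?expR_gt0.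
rewrite -[X in _ <= X]expRK ler_ln ?posrE ?expR_gt0 // => /J2 xc j Pj.
by apply/eqP; rewrite -subr_eq0 (xc j Pj).
Qed.

Lemma softmax_lossE (I : finType) (P : pred I) (A : R) (B : I -> R) :
  - ln (expR A / (expR A + \sum_(j | P j) expR (B j))) =
  ln (1 + \sum_(j | P j) expR (B j - A)).
Proof.
have eA := expR_gt0 A.
have sum_ge0 : 0 <= \sum_(j | P j) expR (B j) by rewrite sumr_ge0 // => j _; rewrite expR_ge0.
rewrite -lnV ?posrE ?divr_gt0 ?ltr_wpDr // invf_div; congr ln.
under [in RHS]eq_bigr => j _ do rewrite expRB.
by rewrite -mulr_suml; field; rewrite gt_eqF.
Qed.

End LogSumExp.

Section BalancedLabels.
Variables (R : realType) (k N : nat) (y : 'I_N -> 'I_k).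
Hypothesis bal : balanced y.

Lemma balanced_sum (F : 'I_k -> R) : (0 < k)%N ->
  \sum_(i < N) F (y i) = N%:R / k%:R * \sum_(c < k) F c.
Proof.
move=> k_gt0; rewrite (partition_big y predT) // mulr_sumr; apply: eq_bigr => c _.
rewrite (eq_bigr (fun=> F c)) => [|i /andP[_ /eqP ->] //].
have -> : N%:R = #|[set i | y i == c]|%:R * k%:R :> R by rewrite -natrM bal.
rewrite mulfK ?pnatr_eq0 -?lt0n // sumr_const mulr_natl.
by congr (_ *+ _); apply: eq_card => i; rewrite !inE.
Qed.

Lemma balanced_label_surj : (0 < N)%N -> forall c, exists i, y i = c.
Proof.
move=> N_gt0 c; have : (0 < #|[set i | y i == c]|)%N.
  by rewrite lt0n; apply: contraTneq N_gt0 => h; rewrite -(bal c) h.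
by case/card_gt0P => i; rewrite inE => /eqP; exists i.
Qed.

End BalancedLabels.

Section SimplexFrame.
Variables (R : realType) (d k : nat).
Hypotheses (k_ge2 : (2 <= k)%N) (k_le : (k <= d.+1)%N).

Let K := k.-1.
Let kE : k = K.+1. Proof. by rewrite prednK // ltnW. Qed.
Let K_gt0 : (0 < K)%N. Proof. by rewrite -ltnS -kE. Qed.
Let K_le : (K <= d)%N. Proof. by rewrite -ltnS -kE. Qed.
Let Kr_gt0 : (0 : R) < K%:R. Proof. by rewrite ltr0n. Qed.

(* The vertices are [a e_j + b 1] for [j < K] and [g 1], in the first [K = k - 1]
   coordinates; the constants solve [a^2 = 1 + 1/K], [g^2 = 1/K] and [a + K b = -g]. *)
Let e (j : nat) : 'rV[R]_d := \row_(r < d) ((r : nat) == j)%:R.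
Let one : 'rV[R]_d := \row_(r < d) ((r < K)%N)%:R.

Let dotv_el j u (jd : (j < d)%N) : dotv (e j) u = u ord0 (Ordinal jd).
Proof.
rewrite /dotv (bigD1 (Ordinal jd)) //= mxE eqxx mul1r big1 ?addr0 // => r.
by rewrite mxE -val_eqE /= => /negbTE ->; rewrite mul0r.
Qed.

Let dotv_ee i j : (i < K)%N -> (j < K)%N -> dotv (e i) (e j) = (i == j)%:R.
Proof. by move=> iK jK; rewrite (dotv_el _ (leq_trans iK K_le)) mxE. Qed.

Let dotv_e1 j : (j < K)%N -> dotv (e j) one = 1.
Proof. by move=> jK; rewrite (dotv_el _ (leq_trans jK K_le)) mxE /= jK. Qed.

Let dotv_11 : dotv one one = K%:R.
Proof.
have widen : \sum_(r < K) (1 : R) = \sum_(r < d | (r < K)%N) 1.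
  exact: big_ord_widen d (fun=> 1) K_le.
rewrite sumr_const card_ord in widen; rewrite widen.
rewrite big_mkcond; apply: eq_bigr => r _; rewrite !mxE.
by case: (_ < _)%N; rewrite ?mulr1 ?mulr0.
Qed.

Let a : R := Num.sqrt (k%:R / K%:R).
Let g : R := - (Num.sqrt K%:R)^-1.
Let b : R := (- g - a) / K%:R.

Let krE : k%:R = K%:R + 1 :> R. Proof. by rewrite kE -addn1 natrD. Qed.

Let a2 : a ^+ 2 = k%:R / K%:R.
Proof. by rewrite sqr_sqrtr // divr_ge0 ?ler0n. Qed.

Let g2 : g ^+ 2 = K%:R^-1.
Proof. by rewrite sqrrN exprVn sqr_sqrtr ?ler0n. Qed.

Let aKb : a + K%:R * b = - g.
Proof. by rewrite /b; field; rewrite gt_eqF. Qed.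

(* [b (2 a + K b) = b (a - g) = (g^2 - a^2) / K] *)
Let cross : 2 * a * b + K%:R * b ^+ 2 = - K%:R^-1.
Proof.
have -> : 2 * a * b + K%:R * b ^+ 2 = (g ^+ 2 - a ^+ 2) / K%:R.
  by rewrite /b; field; rewrite gt_eqF.
by rewrite g2 a2 krE; field; rewrite gt_eqF.
Qed.

Let u (j : nat) : 'rV[R]_d := a *: e j + b *: one.

Let dotv_uu i j : (i < K)%N -> (j < K)%N ->
  dotv (u i) (u j) = a ^+ 2 * (i == j)%:R - K%:R^-1.
Proof.
move=> iK jK; rewrite -cross dotvDl !dotvDr !dotvZl !dotvZr.
by rewrite dotv_ee // (dotvC one) !dotv_e1 // dotv_11; ring.
Qed.

Let dotv_u1 j : (j < K)%N -> dotv (u j) (g *: one) = - K%:R^-1.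
Proof.
move=> jK; rewrite dotvZr dotvDl !dotvZl dotv_e1 // dotv_11.
by rewrite mulr1 (mulrC b) aKb mulrN -expr2 g2.
Qed.

Let vertex (j : 'I_k) : 'rV[R]_d := if (j < K)%N then u j else g *: one.

Lemma exists_simplex_frame : exists W : 'I_k -> 'rV[R]_d,
  (forall j, on_sphere (W j)) /\
  (forall i j, i != j -> dotv (W i) (W j) = - (k.-1%:R)^-1).
Proof.
exists vertex; split => [j|i j ij]; rewrite /on_sphere /vertex.
  case: ifP => jK; first by rewrite dotv_uu // eqxx mulr1 a2 krE; field; rewrite gt_eqF.
  by rewrite dotvZl dotvZr dotv_11 mulrA -expr2 g2 mulVf ?gt_eqF.
have i_or_j : (i < K)%N || (j < K)%N.
  apply: contraTT ij; rewrite negbK negb_or -!leqNgt => /andP[Ki Kj].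
  have le_K (l : 'I_k) : (l <= K)%N by rewrite -ltnS -kE.
  by apply/eqP/val_inj/anti_leq; rewrite (leq_trans (le_K i) Kj) (leq_trans (le_K j) Ki).
case: ifP i_or_j => iK; case: ifP => jK //= _.
- by rewrite dotv_uu // val_eqE (negbTE ij) mulr0 add0r.
- exact: dotv_u1.
- by rewrite dotvC dotv_u1.
Qed.

End SimplexFrame.

Section RiskBound.
Variables (R : realType) (d k N : nat) (y : 'I_N -> 'I_k) (s : R) (f : R -> R).
Hypotheses (k_ge2 : (2 <= k)%N) (s_gt0 : 0 < s) (f_dom : cos_dominated f).
Implicit Types (W : 'I_k -> 'rV[R]_d) (Z : 'I_N -> 'rV[R]_d).

Let K : R := k.-1%:R.
Let b : R := (k%:R + 1) / 2.
Let c : R := s * (- K^-1 - f 0).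
Let Q : R := 1 + K * expR c.
Let p : R := expR c / Q.

Let K_gt0 : 0 < K. Proof. by rewrite ltr0n -ltnS prednK // ltnW. Qed.
Let kE : k%:R = K + 1. Proof. by rewrite /K natr1 prednK // ltnW. Qed.
Let b_gt0 : 0 < b. Proof. by rewrite divr_gt0 // kE; lra. Qed.
Let Q_gt0 : 0 < Q. Proof. by rewrite ltr_wpDr ?mulr_ge0 ?expR_ge0 ?ltW. Qed.
Let p_gt0 : 0 < p. Proof. by rewrite divr_gt0 ?expR_gt0. Qed.
Let ps_gt0 : 0 < p * s / (2 * b). Proof. by apply: divr_gt0; apply: mulr_gt0. Qed.

Let card_other (l : 'I_k) : #|(fun j : 'I_k => j != l)| = k.-1.
Proof. by rewrite -[k in k.-1]card_ord -(cardC1 l); apply: eq_card. Qed.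

Let center W (l : 'I_k) : 'rV[R]_d := b *: W l - \sum_j W j.

Definition sample_loss W Z (i : 'I_N) : R :=
  - ln (expR (s * f (angle (W (y i)) (Z i))) /
        (expR (s * f (angle (W (y i)) (Z i))) +
         \sum_(j < k | j != y i) expR (s * cos (angle (W j) (Z i))))).

Lemma riskE W Z : risk s f y W Z = N%:R^-1 * \sum_(i < N) sample_loss W Z i.
Proof. by []. Qed.

Lemma sum_logit_gap W Z i : (forall j, on_sphere (W j)) -> on_sphere (Z i) ->
  p * \sum_(j | j != y i) (s * (dotv (W j) (Z i) - f (angle (W (y i)) (Z i))) - c) =
    p * s / (2 * b) * (b ^+ 2 - dotv (center W (y i)) (center W (y i)))
    + p * s / (2 * b) * dotv (center W (y i) - b *: Z i) (center W (y i) - b *: Z i)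
    + p * s * K * (f 0 + (dotv (W (y i)) (Z i) - 1) / 2 - f (angle (W (y i)) (Z i))).
Proof.
move=> hW hZ; set v := center W (y i); set a := f (angle (W (y i)) (Z i)).
have split_sq := sub_dotv_sphereE v hZ (lt0r_neq0 b_gt0).
rewrite {1}/v dotvBl dotvZl in split_sq.
have sum_other : \sum_(j | j != y i) (s * (dotv (W j) (Z i) - a) - c) =
    s * (dotv (\sum_j W j) (Z i) - dotv (W (y i)) (Z i)) - K * (s * a + c).
  rewrite sumrB -mulr_sumr sumrB !sumr_const card_other /K.
  by rewrite dotv_suml [in RHS](bigD1 (y i)) //=; ring.
transitivity (p * s * ((b ^+ 2 - dotv v v) / (2 * b)
    + dotv (v - b *: Z i) (v - b *: Z i) / (2 * b))
    + p * s * K * (f 0 + (dotv (W (y i)) (Z i) - 1) / 2 - a)); last by ring.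
rewrite -split_sq sum_other /c /b kE; field; exact: lt0r_neq0.
Qed.

Lemma sample_loss_ge W Z i : (forall j, on_sphere (W j)) -> on_sphere (Z i) ->
  let lower := ln Q + p * s / (2 * b) * (b ^+ 2 - dotv (center W (y i)) (center W (y i))) in
  lower <= sample_loss W Z i /\
  (sample_loss W Z i <= lower ->
   Z i = b^-1 *: center W (y i) /\
   forall j, j != y i -> dotv (W j) (Z i) - f (angle (W (y i)) (Z i)) = - K^-1 - f 0).
Proof.
move=> hW hZ lower; have gap := sum_logit_gap hW hZ.
set v := center W (y i) in lower gap *; set a := f (angle (W (y i)) (Z i)) in gap *.
pose x j := s * (dotv (W j) (Z i) - a).
have lossE : sample_loss W Z i = ln (1 + \sum_(j | j != y i) expR (x j)).
  rewrite /sample_loss softmax_lossE; congr (ln (1 + _)); apply: eq_bigr => j _.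
  by rewrite cos_angle // /x mulrBr.
have [tangent tangent_eq] := ln1Dsum_expR_tangent (fun j => j != y i) x c.
rewrite card_other -/K -/Q -/p -lossE gap in tangent tangent_eq.
have sq_ge0 := mulr_ge0 (ltW ps_gt0) (dotvv_ge0 (v - b *: Z i)).
have margin_ge0 : 0 <= p * s * K * (f 0 + (dotv (W (y i)) (Z i) - 1) / 2 - a).
  apply: mulr_ge0; first exact: mulr_ge0 (mulr_ge0 (ltW p_gt0) (ltW s_gt0)) (ltW K_gt0).
  by rewrite subr_ge0 -(cos_angle (hW _) hZ) f_dom ?angle_itv.
split=> [|le_lower]; first by rewrite /lower; lra.
have /eqP : p * s / (2 * b) * dotv (v - b *: Z i) (v - b *: Z i) = 0.
  by apply: le_anti; rewrite sq_ge0 andbT; move: le_lower; rewrite /lower; lra.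
rewrite mulf_eq0 gt_eqF //= => /eqP/dotvv_eq0/subr0_eq ->.
split; first by rewrite scalerA mulVf ?scale1r ?gt_eqF.
move=> j yj; apply: (mulfI (lt0r_neq0 s_gt0)).
by apply: tangent_eq j yj; move: le_lower; rewrite /lower; lra.
Qed.

Lemma sum_center_balanced W : (forall j, on_sphere (W j)) -> balanced y ->
  \sum_(i < N) (b ^+ 2 - dotv (center W (y i)) (center W (y i))) =
    N%:R / k%:R * dotv (\sum_j W j) (\sum_j W j).
Proof.
move=> hW bal; rewrite (balanced_sum bal (fun l => b ^+ 2 - dotv (center W l) (center W l))).
  rewrite sumrB sumr_const card_ord sum_dotvv_centered // card_ord /b.
  by congr (_ * _); field.
exact: ltnW.
Qed.

Lemma risk_ge W Z : (forall j, on_sphere (W j)) -> (forall i, on_sphere (Z i)) ->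
  balanced y -> (0 < N)%N ->
  ln Q <= risk s f y W Z /\
  (risk s f y W Z <= ln Q ->
   (forall i, Z i = W (y i)) /\ forall i j, j != y i -> dotv (W j) (W (y i)) = - K^-1).
Proof.
move=> hW hZ bal N_gt0; set S := \sum_j W j.
pose lower i := ln Q + p * s / (2 * b) * (b ^+ 2 - dotv (center W (y i)) (center W (y i))).
have le_lower i : lower i <= sample_loss W Z i := (sample_loss_ge hW (hZ i)).1.
have Nr_gt0 : (0 : R) < N%:R by rewrite ltr0n.
set T := p * s / (2 * b) * (N%:R / k%:R * dotv S S).
have T_ge0 : 0 <= T.
  exact: mulr_ge0 (ltW ps_gt0) (mulr_ge0 (divr_ge0 (ler0n _ _) (ler0n _ _)) (dotvv_ge0 S)).
have slack_ge0 : 0 <= \sum_i (sample_loss W Z i - lower i).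
  by rewrite sumr_ge0 // => i _; rewrite subr_ge0.
have risk_split : risk s f y W Z = ln Q + N%:R^-1 * (\sum_i (sample_loss W Z i - lower i) + T).
  rewrite riskE sumrB big_split /= sumr_const card_ord -mulr_sumr.
  rewrite sum_center_balanced // -/S -/T -mulr_natl; field; exact: lt0r_neq0.
split.
  by rewrite risk_split lerDl; apply: mulr_ge0; [rewrite invr_ge0 ler0n | exact: addr_ge0].
rewrite risk_split gerDl pmulr_rle0 ?invr_gt0 // => le0.
have /eqP : \sum_i (sample_loss W Z i - lower i) + T = 0.
  by apply: le_anti; rewrite le0 addr_ge0.
rewrite paddr_eq0 // => /andP[/eqP slack0 /eqP T0].
have S0 : S = 0.
  have Nk_gt0 : (0 : R) < N%:R / k%:R by rewrite divr_gt0 // ltr0n ltnW.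
  move/eqP: T0; rewrite mulf_eq0 (gt_eqF ps_gt0) mulf_eq0 (gt_eqF Nk_gt0) /=.
  by move=> /eqP /dotvv_eq0.
have tight i : sample_loss W Z i <= lower i.
  by rewrite -subr_le0 (psumr_eq0P _ slack0) // => l _; rewrite subr_ge0.
have Zy i : Z i = W (y i).
  have [_ /(_ (tight i)) [-> _]] := sample_loss_ge hW (hZ i).
  by rewrite /center -/S S0 subr0 scalerA mulVf ?scale1r ?gt_eqF.
split=> // i j jy; have [_ /(_ (tight i)) [_ /(_ j jy)]] := sample_loss_ge hW (hZ i).
by rewrite Zy angle_refl // => /eqP; rewrite subr_eq addrNK => /eqP.
Qed.

Lemma risk_simplex W : (forall j, on_sphere (W j)) -> (0 < N)%N ->
  (forall i j, i != j -> dotv (W i) (W j) = - K^-1) ->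
  risk s f y W (fun i => W (y i)) = ln Q.
Proof.
move=> hW N_gt0 hG; rewrite riskE (eq_bigr (fun=> ln Q)) => [|i _].
  by rewrite sumr_const card_ord -[ln Q *+ _]mulr_natl mulKf ?pnatr_eq0 -?lt0n.
rewrite /sample_loss softmax_lossE angle_refl //.
under eq_bigr => j jy do rewrite cos_angle // hG //.
by rewrite sumr_const card_other -mulr_natl /Q /c mulrBr.
Qed.

End RiskBound.

Theorem proposition2 (R : realType) (d k N : nat) (y : 'I_N -> 'I_k) (s : R)
  (f : R -> R) :
  (2 <= d)%N -> (2 <= k)%N -> (k <= d.+1)%N ->
  balanced y -> (k <= N)%N -> 0 < s -> margin_fun f ->
  forall (W : 'I_k -> 'rV[R]_d) (Z : 'I_N -> 'rV[R]_d),
    (forall j, on_sphere (W j)) -> (forall i, on_sphere (Z i)) ->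
    ((forall (W' : 'I_k -> 'rV[R]_d) (Z' : 'I_N -> 'rV[R]_d),
        (forall j, on_sphere (W' j)) -> (forall i, on_sphere (Z' i)) ->
        risk s f y W Z <= risk s f y W' Z')
     <->
     ((forall i j : 'I_k, i != j -> dotv (W i) (W j) = - (k.-1%:R)^-1) /\
      (forall i : 'I_N, Z i = W (y i)))).
Proof.
move=> _ k_ge2 k_le bal k_le_N s_gt0 /margin_fun_cos_dominated f_dom W Z hW hZ.
have N_gt0 : (0 < N)%N by rewrite (leq_trans _ k_le_N) // ltnW.
have [W0 [hW0 hG0]] := exists_simplex_frame R k_ge2 k_le.
have min_value := risk_simplex y s f hW0 N_gt0 hG0.
have [_ risk_lb_eq] := risk_ge k_ge2 s_gt0 f_dom hW hZ bal N_gt0.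
split=> [minimal | [hG Zy] W' Z' hW' hZ'].
- have := minimal _ _ hW0 (fun i => hW0 (y i)).
  rewrite min_value => /risk_lb_eq[Zy Wy].
  split=> // i j ij; have [n yn] := balanced_label_surj bal N_gt0 j.
  by rewrite -yn Wy // yn.
- have -> : Z = (fun i => W (y i)) by apply: funext.
  rewrite (risk_simplex y s f hW N_gt0 hG).
  exact: (risk_ge k_ge2 s_gt0 f_dom hW' hZ' bal N_gt0).1.
Qed.
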